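(* Let $n\ge1$ and let $i,j,k\in\{0,\dots,2^n-1\}$ be mutually distinct. (a) If $i\,n\,j$ and $j\,n\,k$, then not $i\,n\,k$; if $i\,n\,j$ and ($j\,d\,k$ or $j\,c\,k$), then $i\,n\,k$. (b) If $i\,c\,j$ and $j\,c\,k$, then $i\,c\,k$. (c) If $i\,d\,j$ and $j\,d\,k$, then $i\,c\,k$. (d) If $i\,c\,j$ and $j\,d\,k$, then $i\,d\,k$.
   Context: For $n\ge1$, an $n$-path is a string $\alpha_0\alpha_1\cdots\alpha_n$ with $\alpha_k\in\{0,1\}$, $\alpha_0=0$; the $n$-paths are identified with $\{0,\dots,2^n-1\}$, the path $\omega_j$ being the one whose string is the binary representation of $j$ (with $\alpha_n$ least significant). $D^n$ is the $2^n\times 2^n$ matrix with $D^n_{jk}=D^n(\omega_j,\omega_k)$, where $D^n(\omega,\omega')=2^{-n}\prod_{k=1}^n i^{|\alpha_k-\alpha_{k-1}|}\prod_{k=1}^n i^{-|\alpha'_k-\alpha'_{k-1}|}\,\delta_{\alpha_n\alpha'_n}$ for $\omega=\alpha_0\cdots\alpha_n$, $\omega'=\alpha'_0\cdots\alpha'_n$ (here $i=\sqrt{-1}$). For distinct indices $p,q$ the interference term is $I^n_{pq}=2\,\mathrm{Re}\,D^n_{pq}$. We write $p\,n\,q$ if $I^n_{pq}=0$, $p\,c\,q$ if $I^n_{pq}>0$, and $p\,d\,q$ if $I^n_{pq}<0$. *)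

From HB Require Import structures.
From mathcomp Require Import all_boot all_order all_algebra all_field.
Set Implicit Arguments. Unset Strict Implicit. Unset Printing Implicit Defensive.
Import Order.TTheory GRing.Theory Num.Theory.
Local Open Scope ring_scope.

(* The n-path omega_j : the string alpha_0 alpha_1 ... alpha_n which is the
   binary representation of j (alpha_n least significant), padded to length
   n+1.  [alpha n j k] is the digit alpha_k of omega_j (0 <= k <= n).
   For j < 2^n we have alpha_0 = 0. *)
Definition alpha (n j k : nat) : nat := odd (j %/ 2 ^ (n - k)).

Definition jump (n j k : nat) : nat := `|(alpha n j k)%:Z - (alpha n j k.-1)%:Z|%N.

Definition Dn (n p q : nat) : algC :=
  (2%:R ^- n) * (\prod_(k < n) 'i ^+ jump n p k.+1)
              * (\prod_(k < n) ('i ^+ jump n q k.+1)^-1)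
              * (alpha n p n == alpha n q n)%:R.

Definition Dmx (n : nat) : 'M[algC]_(2 ^ n) := \matrix_(p, q) Dn n p q.

Definition Interf (n : nat) (p q : 'I_(2 ^ n)) : algC := 2 * 'Re (Dmx n p q).

Definition rel_n n (p q : 'I_(2 ^ n)) : Prop := Interf p q = 0.
Definition rel_c n (p q : 'I_(2 ^ n)) : Prop := 0 < Interf p q.
Definition rel_d n (p q : 'I_(2 ^ n)) : Prop := Interf p q < 0.

From mathcomp Require Import all_boot all_order all_algebra all_field.
From mathcomp Require Import ring.
Import Order.TTheory GRing.Theory Num.Theory.
Local Open Scope ring_scope.

(* Writing J_p for the number of jumps of omega_p, D^n_pq is 2^-n w_pq
   times the test that the last digits agree, where w_pq = i^(J_p - J_q)
   (turn n p q below) is a fourth root of unity.  Since alpha_0 = 0, the last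
   digit of omega_p is the parity of J_p, so when the last digits differ
   w_pq = +-i has real part 0; hence in all cases I^n_pq = 2^(1-n) Re w_pq.
   The relations n, c, d thus say that w_pq is +-i, 1, -1, and since
   w_ik = w_ij w_jk each assertion is a line of the multiplication table of
   {1, -1, i, -i}. *)

Section FourthRootsOfUnity.

Context {C : numClosedFieldType}.
Implicit Types w : C.

Lemma Ci_root4 : 'i ^+ 4 = 1 :> C.
Proof. by rewrite (exprM _ 2 2) sqrCi sqrrN expr1n. Qed.

Lemma root4_cases w : w ^+ 4 = 1 -> [\/ w = 1, w = -1, w = 'i | w = - 'i].
Proof.
have factor : w ^+ 4 - 1 = (w - 1) * (w + 1) * ((w - 'i) * (w + 'i)).
  by rewrite -!subr_sqr sqrCi expr1n; ring.
move=> /eqP; rewrite -subr_eq0 factor !mulf_eq0 !subr_eq0 !addr_eq0.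
by case/orP=> /orP[]/eqP->; [constructor 1|constructor 2|constructor 3|constructor 4].
Qed.

Let Re1 : 'Re (1 : C) = 1. Proof. exact/Creal_ReP/real1. Qed.

Let oner_neqN1 : (1 : C) != -1. Proof. by rewrite eq_sym eqNr oner_eq0. Qed.

Lemma Re_root4_eq0 w : w ^+ 4 = 1 -> ('Re w == 0) = (w ^+ 2 == -1).
Proof.
case/root4_cases=> ->.
all: rewrite ?raddfN /= ?Re1 ?Re_i ?oppr0 ?sqrrN ?sqrCi ?expr1n ?eqxx //.
- by rewrite oner_eq0 (negbTE oner_neqN1).
- by rewrite oppr_eq0 oner_eq0 (negbTE oner_neqN1).
Qed.

Lemma Re_root4_gt0 w : w ^+ 4 = 1 -> (0 < 'Re w) = (w == 1).
Proof.
case/root4_cases=> ->; rewrite ?raddfN /= ?Re1 ?Re_i ?oppr0 ?ltxx ?ltr01 ?eqxx //.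
- by rewrite oppr_gt0 ltr10 eq_sym (negbTE oner_neqN1).
- by apply/esym/negbTE; apply: contraNneq (nonRealCi C) => ->; apply: real1.
- rewrite eqr_oppLR; apply/esym/negbTE; apply: contraNneq (nonRealCi C) => ->.
  by rewrite rpredN real1.
Qed.

Lemma Re_root4_lt0 w : w ^+ 4 = 1 -> ('Re w < 0) = (w == -1).
Proof.
move=> w4; rewrite -oppr_gt0 -raddfN Re_root4_gt0 ?eqr_oppLR //.
by rewrite (exprM _ 2 2) sqrrN -exprM.
Qed.

End FourthRootsOfUnity.

Definition jumps (n p : nat) : nat := \sum_(k < n) jump n p k.+1.

Lemma odd_sum_jump n p m :
  odd (\sum_(k < m) jump n p k.+1) = (alpha n p m != alpha n p 0).
Proof.
elim: m => [|m IHm]; first by rewrite big_ord0 eqxx.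
rewrite big_ord_recr oddD IHm /jump /alpha /=.
by case: (odd (p %/ _ ^ (n - m.+1))) (odd (p %/ _ ^ (n - m)))
           (odd (p %/ _ ^ (n - 0))) => [] [] [].
Qed.

Lemma alpha_last n p : (p < 2 ^ n)%N -> alpha n p n = odd (jumps n p).
Proof.
move=> p_lt; rewrite /jumps odd_sum_jump.
have -> : alpha n p 0 = 0%N by rewrite /alpha subn0 divn_small.
by rewrite /alpha; case: odd.
Qed.

Definition phase (n p : nat) : algC := 'i ^+ jumps n p.

Definition turn (n p q : nat) : algC := phase n p / phase n q.

Lemma turn_mul n p q r : turn n p q * turn n q r = turn n p r.
Proof. by rewrite /turn mulrA divfK // expf_neq0 // neq0Ci. Qed.

Lemma turn_root4 n p q : turn n p q ^+ 4 = 1.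
Proof. by rewrite expr_div_n -!exprM !(mulnC _ 4) !exprM Ci_root4 !expr1n divr1. Qed.

Lemma sqr_turn n p q : turn n p q ^+ 2 = (-1) ^+ (jumps n p + jumps n q).
Proof.
by rewrite expr_div_n -!exprM !(mulnC _ 2) !exprM sqrCi invr_sign -exprD.
Qed.

Lemma Interf_turn n (p q : 'I_(2 ^ n)) :
  Interf p q = 2 * 2%:R ^- n * 'Re (turn n p q).
Proof.
pose parity_eq : algC := (alpha n p n == alpha n q n)%:R.
have Re_turn : 'Re (turn n p q * parity_eq) = 'Re (turn n p q).
  rewrite /parity_eq !alpha_last //.
  case: eqP => [_|parity_neq]; first by rewrite mulr1.
  rewrite mulr0 raddf0; apply/esym/eqP.
  rewrite Re_root4_eq0 ?turn_root4 // sqr_turn -signr_odd oddD.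
  by move: parity_neq; case: (odd _); case: (odd _).
rewrite /Interf /Dmx mxE /Dn prodfV !prodrXr -/(jumps n p) -/(jumps n q) -/parity_eq.
have -> : 2%:R ^- n * 'i ^+ jumps n p * ('i ^+ jumps n q)^-1 * parity_eq
          = 2%:R ^- n * (turn n p q * parity_eq) by rewrite !mulrA.
by rewrite ReMl ?Re_turn ?mulrA // rpredV rpredX ?realn.
Qed.

Section Relations.

Variables (n : nat) (p q : 'I_(2 ^ n)).

Let scale_gt0 : 0 < 2 * 2%:R ^- n :> algC.
Proof. by rewrite mulr_gt0 // invr_gt0 exprn_gt0. Qed.

Lemma rel_nE : rel_n p q <-> turn n p q ^+ 2 = -1.
Proof.
rewrite /rel_n Interf_turn; split=> [/eqP|/eqP sqr_turnN1].
  by rewrite mulf_eq0 gt_eqF //= Re_root4_eq0 ?turn_root4 // => /eqP.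
by apply/eqP; rewrite mulf_eq0 Re_root4_eq0 ?turn_root4 // sqr_turnN1 orbT.
Qed.

Lemma rel_cE : rel_c p q <-> turn n p q = 1.
Proof.
by rewrite /rel_c Interf_turn pmulr_rgt0 // Re_root4_gt0 ?turn_root4 //; split=> /eqP.
Qed.

Lemma rel_dE : rel_d p q <-> turn n p q = -1.
Proof.
by rewrite /rel_d Interf_turn pmulr_rlt0 // Re_root4_lt0 ?turn_root4 //; split=> /eqP.
Qed.

End Relations.

Theorem corollary2p2 (n : nat) (hn : (1 <= n)%N) (i j k : 'I_(2 ^ n))
  (hij : i != j) (hjk : j != k) (hik : i != k) :
  ((rel_n i j -> rel_n j k -> ~ rel_n i k) /\
   (rel_n i j -> (rel_d j k \/ rel_c j k) -> rel_n i k)) /\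
  (rel_c i j -> rel_c j k -> rel_c i k) /\
  (rel_d i j -> rel_d j k -> rel_c i k) /\
  (rel_c i j -> rel_d j k -> rel_d i k).
Proof.
have turn_ik : turn n i k = turn n i j * turn n j k by rewrite turn_mul.
have oneN1 : (1 : algC) <> -1 by move/eqP; rewrite eq_sym eqNr oner_eq0.
split; [split|split; [|split]].
- move=> /rel_nE ij /rel_nE jk /rel_nE.
  rewrite turn_ik exprMn ij jk mulrNN mulr1; exact: oneN1.
- move=> /rel_nE ij jk; apply/rel_nE; rewrite turn_ik exprMn ij.
  by case: jk => [/rel_dE|/rel_cE] ->; rewrite ?sqrrN expr1n mulr1.
- by move=> /rel_cE ij /rel_cE jk; apply/rel_cE; rewrite turn_ik ij jk mulr1.
- by move=> /rel_dE ij /rel_dE jk; apply/rel_cE; rewrite turn_ik ij jk mulrNN mulr1.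
- by move=> /rel_cE ij /rel_dE jk; apply/rel_dE; rewrite turn_ik ij jk mul1r.
Qed.
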